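(* Let $X$ be a compact metrizable space, let $f\in\mathrm{C}(X)$ be self-adjoint, and let $\varepsilon>0$. Then there exist $n\in\mathbb N$, $\delta>0$ and self-adjoint $f_1,\dots,f_n\in\mathrm{C}(X)$ such that $\|f-f_i\|_\infty<\varepsilon$ for $i=1,\dots,n$, and $\frac1n\,|\{1\le i\le n:|f_i(x)|<\delta\}|<\varepsilon$ for all $x\in X$. In particular, $\frac1n(\tau(\chi_\delta(f_1))+\cdots+\tau(\chi_\delta(f_n)))<\varepsilon$ for every tracial state $\tau$ of $\mathrm{C}(X)$.
   Context: $\chi_\delta\colon\mathbb R\to\mathbb R$ is the continuous function equal to $1$ on $\{|t|<\delta/2\}$, $0$ on $\{|t|>\delta\}$, and linear otherwise. *)

From HB Require Import structures.
From mathcomp Require Import all_boot all_order all_algebra.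
From mathcomp Require Import all_classical all_reals all_analysis.
From mathcomp Require Import complex.
Set Implicit Arguments. Unset Strict Implicit. Unset Printing Implicit Defensive.
Import Order.TTheory GRing.Theory Num.Theory.
Import numFieldNormedType.Exports.
Local Open Scope classical_set_scope.
Local Open Scope ring_scope.

Definition chi {R : realType} (delta t : R) : R :=
  if `|t| < delta / 2 then 1
  else if delta < `|t| then 0
  else (delta - `|t|) / (delta - delta / 2).

Definition sup_norm {R : realType} {X : Type} (g : X -> R) : R :=
  sup [set `|g x| | x in [set: X]].

Definition ccontinuous {R : realType} {X : topologicalType} (g : X -> R[i]) :=
  continuous (fun x => complex.Re (g x)) /\ continuous (fun x => complex.Im (g x)).

(* tracial state on C(X) = continuous functions X -> C, given as a map on all
   functions X -> C, constrained on the continuous ones *)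
Definition tracial_state {R : realType} {X : topologicalType}
  (tau : (X -> R[i]) -> R[i]) : Prop :=
  [/\ (forall (a : R[i]) (g h : X -> R[i]), ccontinuous g -> ccontinuous h ->
         tau (fun x => a * g x + h x) = a * tau g + tau h),
      (forall g : X -> R[i], ccontinuous g -> (forall x, 0 <= g x) -> 0 <= tau g),
      tau (fun _ => 1) = 1 &
      (forall g h : X -> R[i], ccontinuous g -> ccontinuous h ->
         tau (fun x => g x * h x) = tau (fun x => h x * g x))].

From HB Require Import structures.
From mathcomp Require Import all_boot all_order all_algebra.
From mathcomp Require Import all_classical all_reals all_analysis.
From mathcomp Require Import complex ring lra.
Set Implicit Arguments. Unset Strict Implicit. Unset Printing Implicit Defensive.
Import Order.TTheory GRing.Theory Num.Theory.
Import numFieldNormedType.Exports.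
Local Open Scope classical_set_scope.
Local Open Scope ring_scope.

(* Take the translates f_i = f + i s (0 <= i < n) with n > 1/eps and s = eps/n,
   so that every f_i is eps-close to f.  At each point x the values f_i(x) form
   an arithmetic progression of step s, so at most one of them lies in
   [-delta, delta] once 2 delta < s.  Hence the counting ratio is at most
   1/n < eps, and since chi_delta is at most the indicator of [-delta, delta],
   the continuous function sum_i chi_delta(f_i) is bounded by 1; positivity
   and linearity of tau then give sum_i tau(chi_delta(f_i)) <= 1. *)

Section cutoff.
Variables (R : realType) (d : R).
Hypothesis d_gt0 : 0 < d.

Lemma chiE (t : R) : chi d t = Num.min 1 (Num.max 0 ((d - `|t|) / (d / 2))).
Proof.
rewrite /chi (_ : d - d / 2 = d / 2); last by field.
have d2_gt0 : 0 < d / 2 by rewrite divr_gt0.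
set x := (d - `|t|) / (d / 2).
have x_gt1E : (1 < x) = (`|t| < d / 2).
  by rewrite /x ltr_pdivlMr // mul1r; apply/idP/idP => ?; lra.
have x_lt0E : (x < 0) = (d < `|t|).
  by rewrite /x ltr_pdivrMr // mul0r; apply/idP/idP => ?; lra.
case: ifPn => [|t_ge]; first by rewrite -x_gt1E => ?; rewrite max_r ?min_l; lra.
case: ifPn => [|t_le]; first by rewrite -x_lt0E => ?; rewrite max_l ?min_r; lra.
by rewrite max_r ?min_r // leNgt ?x_gt1E ?x_lt0E.
Qed.

Lemma continuous_chi : continuous (chi d).
Proof.
pose ramp (t : R) := (d - `|t|) / (d / 2).
have -> : chi d = (fun=> 1) \min ((fun=> 0) \max ramp).
  by apply: funext => t; rewrite chiE.
move=> t; apply: continuous_min; first exact: cst_continuous.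
apply: continuous_max; first exact: cst_continuous.
apply: continuousM; last exact: cst_continuous.
apply: continuousB; [exact: cst_continuous | exact: norm_continuous].
Qed.

Lemma chi_le_indicator (t : R) : chi d t <= (if `|t| <= d then 1 else 0).
Proof.
case: ifPn => [_|]; first by rewrite chiE ge_min lexx.
rewrite -ltNge => d_lt; rewrite /chi d_lt ifF //.
apply/negbTE; rewrite -leNgt; apply/ltW/(lt_trans _ d_lt).
by rewrite ltr_pdivrMr // ltr_pMr // ltr1n.
Qed.

End cutoff.

Lemma card_progression_near0_le1 (R : realFieldType) (n : nat) (a s d : R) :
  2 * d < s -> (#|[pred i : 'I_n | (`|a + i%:R * s| <= d)%R]| <= 1)%N.
Proof.
move=> ds; apply/card_le1_eqP => i j; rewrite !inE.
suff near_lt (k l : 'I_n) :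
    `|a + k%:R * s| <= d -> `|a + l%:R * s| <= d -> (k < l)%N -> False.
  move=> hi hj; apply: val_inj.
  by case: (ltngtP i j) => [/(near_lt _ _ hi hj)|/(near_lt _ _ hj hi)|].
rewrite !ler_norml => /andP[? ?] /andP[? ?].
rewrite -(ler_nat R) -natr1 => ?; nra.
Qed.

Lemma sum_chi_progression_le1 (R : realType) (n : nat) (a s d : R) :
  0 < d -> 2 * d < s -> \sum_(i < n) chi d (a + i%:R * s) <= 1.
Proof.
move=> d_gt0 ds.
apply: le_trans (ler_sum _ (fun i _ => chi_le_indicator d_gt0 _)) _.
rewrite -big_mkcond sumr_const /= -mulr_natr mul1r lern1.
exact: card_progression_near0_le1.
Qed.

Lemma sup_norm_le (R : realType) (X : Type) (g : X -> R) (c : R) :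
  0 <= c -> (forall x, `|g x| <= c) -> sup_norm g <= c.
Proof.
move=> c_ge0 gc; rewrite /sup_norm.
have [->|/set0P ne] := eqVneq [set `|g x| | x in [set: X]] set0.
  by rewrite sup0.
by apply: ge_sup => // _ [x _ <-].
Qed.

Lemma continuous_sum (R : realType) (X : topologicalType) (I : Type)
    (r : seq I) (h : I -> X -> R) :
  (forall j, continuous (h j)) -> continuous (fun x => \sum_(j <- r) h j x).
Proof. by move=> hc; apply: continuous_big => //; exact: add_continuous. Qed.

Lemma ccontinuous_real (R : realType) (X : topologicalType) (g : X -> R) :
  continuous g -> ccontinuous (fun x => (g x)%:C%C).
Proof. by move=> gc; split => //=; exact: cst_continuous. Qed.

Section tracial_state.
Variables (R : realType) (X : topologicalType) (tau : (X -> R[i]) -> R[i]).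
Hypothesis tau_tracial : tracial_state tau.

Lemma tracial_state0 : tau (fun _ => 0) = 0.
Proof.
have [lin _ _ _] := tau_tracial.
have c0 : ccontinuous (fun _ : X => 0 : R[i]) by split; exact: cst_continuous.
have := lin 1 _ _ c0 c0; rewrite !mul1r addr0 => /esym/eqP.
by rewrite -subr_eq0 addrK => /eqP.
Qed.

Lemma tracial_state_sum (I : Type) (r : seq I) (h : I -> X -> R) :
  (forall j, continuous (h j)) ->
  \sum_(j <- r) tau (fun x => (h j x)%:C%C) =
    tau (fun x => (\sum_(j <- r) h j x)%:C%C).
Proof.
have [lin _ _ _] := tau_tracial.
move=> hc; elim: r => [|j r IH].
  by rewrite big_nil -tracial_state0; congr tau; apply: funext => x; rewrite big_nil.
rewrite big_cons IH -[X in X + _]mul1r -lin; last 2 first.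
- exact: ccontinuous_real.
- exact/ccontinuous_real/continuous_sum.
by congr tau; apply: funext => x; rewrite big_cons mul1r rmorphD.
Qed.

Lemma tracial_state_ler (g h : X -> R) : continuous g -> continuous h ->
  (forall x, g x <= h x) -> tau (fun x => (g x)%:C%C) <= tau (fun x => (h x)%:C%C).
Proof.
move=> gc hc gh; have [lin pos _ _] := tau_tracial.
have hgc : continuous (fun x => h x - g x).
  by move=> x; exact: (@continuousB _ R^o _ h g x (hc x) (gc x)).
rewrite -subr_ge0 addrC -mulN1r -lin; try exact: ccontinuous_real.
have -> : (fun x => -1 * (g x)%:C%C + (h x)%:C%C) = (fun x => (h x - g x)%:C%C).
  by apply: funext => x; rewrite mulN1r rmorphB addrC.
by apply: pos => [|x]; [exact: ccontinuous_real | rewrite ler0c subr_ge0].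
Qed.

End tracial_state.

Theorem corollary3p8 (R : realType) (X : metricType R)
  (hX : compact [set: X]) (f : X -> R) (hf : continuous f)
  (eps : R) (heps : 0 < eps) :
  exists (n : nat) (delta : R) (fs : 'I_n -> X -> R),
    [/\ (0 < n)%N /\ 0 < delta,
        (forall i, continuous (fs i)),
        (forall i, sup_norm (fun x => f x - fs i x) < eps),
        (forall x, #|[pred i : 'I_n | `|fs i x| < delta]|%:R / n%:R < eps) &
        (forall tau : (X -> R[i]) -> R[i], tracial_state tau ->
           (\sum_(i < n) tau (fun x => ((chi delta (fs i x))%:C)%C)) / n%:R
             < (eps%:C)%C)].
Proof.
pose n := (Num.truncn eps^-1).+1; pose s := eps / n%:R; pose d := s / 4.
have n_gt0 : 0 < n%:R :> R by rewrite ltr0n.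
have inv_n_lt : n%:R^-1 < eps.
  by rewrite -ltf_pV2 ?posrE ?invr_gt0 // invrK truncnS_gt.
have s_gt0 : 0 < s by rewrite divr_gt0.
have d_gt0 : 0 < d by rewrite divr_gt0.
have ds : 2 * d < s by rewrite /d; lra.
have fs_cont (i : 'I_n) : continuous (fun x => f x + i%:R * s).
  move=> x; apply: (@continuousD _ _ _ f (fun=> i%:R * s)); first exact: hf.
  exact: cst_continuous.
have chi_cont (i : 'I_n) : continuous (fun x => chi d (f x + i%:R * s)).
  by move=> x; apply: (continuous_comp (fs_cont i x)); exact: continuous_chi.
exists n, d, (fun i x => f x + i%:R * s); split => //.
- move=> i; apply: le_lt_trans (_ : `|i%:R * s| < eps).
    by apply: sup_norm_le => // x; rewrite opprD addNKr normrN.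
  rewrite ger0_norm; last exact: mulr_ge0 (ler0n _ _) (ltW s_gt0).
  by rewrite /s mulrA ltr_pdivrMr // mulrC ltr_pM2l // ltr_nat.
- move=> x; apply: le_lt_trans inv_n_lt; rewrite -[leRHS]mul1r ler_wpM2r ?invr_ge0 //.
  rewrite lern1; apply: leq_trans (card_progression_near0_le1 n (f x) ds).
  by apply/subset_leq_card/fintype.subsetP => i; rewrite !inE => /ltW.
- move=> tau tau_tracial; rewrite tracial_state_sum //.
  apply: (@le_lt_trans _ _ (n%:R^-1)%:C%C); last by rewrite ltcR.
  rewrite fmorphV rmorph_nat -[leRHS]mul1r ler_wpM2r ?invr_ge0 ?ler0n //.
  have [_ _ <- _] := tau_tracial; apply: tracial_state_ler => //.
  - exact: continuous_sum.
  - exact: cst_continuous.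
  - by move=> x; exact: (sum_chi_progression_le1 n (f x) d_gt0 ds).
Qed.
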